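(* Let $T$ be a tree, $(X_\gamma)_{\gamma\in\Gamma_T}$ a $\mathbf{P}_t$-chain on $T$, $s>0$, and let $x_1,\dots,x_m$ be distinct points of $\Gamma_T$ each at distance exactly $s$ from the root. For $i\in\mathcal{S}$ let $S_i=|\{r:X_{x_r}=i\}|$. Then $\mathbb{E}^i[S_i]=p_{ii}(s)m$ and for every $\delta>0$, $$\mathbb{P}^i\big[|S_i-\mathbb{E}^i[S_i]|>\delta m\big]\le\frac{1-e^{-q_is}}{\delta^2}.$$
   Context: A tree $T=(V,E,\rho,\ell)$ is a finite rooted tree with positive edge lengths, viewed as a metric object with point set $\Gamma_T$; distance from the root to a point is the length of the path from $\rho$. Markov process on countable $\mathcal{S}$ with transition matrices $\mathbf{P}_t=(p_{ij}(t))$ and stable conservative $Q$-matrix, $q_i=-q_{ii}=\sum_{j\ne i}q_{ij}<\infty$. A $\mathbf{P}_t$-chain on $T$: root state $X_\rho$, then along each edge $(u,v)$ run the chain from $X_u$ for time $\ell_{(u,v)}$, independently on outgoing edges given the branching state, $X_\gamma$ being the state at point $\gamma$; $\mathbb{P}^i,\mathbb{E}^i$ refer to root state $i$. *)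

From mathcomp Require Import all_boot.
From Stdlib Require Import Reals.

Set Implicit Arguments.
Unset Strict Implicit.
Unset Printing Implicit Defensive.

Definition Rleb (x y : R) : bool := if Rle_dec x y then true else false.
Definition Rltb (x y : R) : bool := if Rlt_dec x y then true else false.
Definition Reqb (x y : R) : bool := if Req_EM_T x y then true else false.

Definition kron (i j : nat) : R := if i == j then 1%R else 0%R.

Definition is_transition_function (p : nat -> nat -> R -> R) : Prop :=
  (forall i j t, (0 <= t)%R -> (0 <= p i j t)%R) /\
  (forall i t, (0 <= t)%R -> infinite_sum (fun j => p i j t) 1%R) /\
  (forall i j, p i j 0%R = kron i j) /\
  (forall i j s t, (0 <= s)%R -> (0 <= t)%R ->
      infinite_sum (fun k => (p i k s * p k j t)%R) (p i j (s + t)%R)).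

Definition is_Q_matrix_of (p : nat -> nat -> R -> R) (q : nat -> nat -> R) : Prop :=
  forall i j, forall eps : R, (0 < eps)%R -> exists delta : R, (0 < delta)%R /\
    forall h : R, (0 < h)%R -> (h < delta)%R ->
      (Rabs ((p i j h - kron i j) / h - q i j) < eps)%R.

(* stable (q_i finite: automatic, q is real-valued) and conservative:
   q_i = - q_ii = sum_{j <> i} q_ij *)
Definition stable_conservative (q : nat -> nat -> R) : Prop :=
  forall i, infinite_sum (fun j => if j == i then 0%R else q i j) (- q i i)%R.

(* Vertices V; every non-root vertex v has the edge (par v, v) of length len v. *)
Record tree (V : finType) := Tree {
  troot : V;
  tpar : V -> V;
  tlen : V -> R;
  tpar_root : tpar troot = troot;
  treach : forall v, iter #|V| tpar v = troot;
  tlen_pos : forall v, v <> troot -> (0 < tlen v)%R }.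

Section TreeDefs.
Variables (V : finType) (T : tree V).

Definition vdepth (v : V) : R :=
  \big[Rplus/0%R]_(k < #|V|)
     (if iter k (tpar T) v == troot T then 0%R else tlen T (iter k (tpar T) v)).

(* A point of Gamma_T is encoded as (v, t): the root is (troot, 0); otherwise
   v <> troot and 0 < t <= len v, the point of the edge (par v, v) at distance
   t from par v (t = len v is the vertex v itself).  Encoding is unique. *)
Definition valid_point (x : V * R) : Prop :=
  (x.1 = troot T /\ x.2 = 0%R) \/
  (x.1 <> troot T /\ (0 < x.2)%R /\ (x.2 <= tlen T x.1)%R).

Definition pdist (x : V * R) : R :=
  if x.1 == troot T then 0%R else (vdepth (tpar T x.1) + x.2)%R.

Definition pt_eqb (x y : V * R) : bool := (x.1 == y.1) && Reqb x.2 y.2.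

Definition anc (x y : V * R) : bool :=
  (x.1 == troot T) || ((x.1 == y.1) && Rleb x.2 y.2) ||
  [exists k : 'I_#|V|, (0 < k) && (iter k (tpar T) y.1 == x.1)].

Variable (m : nat) (x : 'I_m -> V * R).

Definition FP := (V + 'I_m)%type.

Definition fpt (a : FP) : V * R :=
  match a with
  | inl v => if v == troot T then (troot T, 0%R) else (v, tlen T v)
  | inr r => x r
  end.

Definition tiebreak (a b : FP) : bool :=
  match a, b with inl _, inr _ => true | _, _ => false end.

(* strict tree order on F (coinciding points: vertex before x_r) *)
Definition fprec (a b : FP) : bool :=
  anc (fpt a) (fpt b) && (~~ pt_eqb (fpt a) (fpt b) || tiebreak a b).

Definition fparent (a b : FP) : bool :=
  fprec a b && [forall c : FP, ~~ (fprec a c && fprec c b)].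

(* Joint weight of a state configuration c on F for a P_t-chain on T:
   product over edges (a,b) of the induced tree of p_{c a, c b}(d b - d a). *)
Definition chain_weight (p : nat -> nat -> R -> R) (c : FP -> nat) : R :=
  \big[Rmult/1%R]_(ab : FP * FP | fparent ab.1 ab.2)
     p (c ab.1) (c ab.2) (pdist (fpt ab.2) - pdist (fpt ab.1))%R.

(* Partial sum (states truncated to {0..N-1}) of E^i[ f(X_{x_1},...,X_{x_m}) ]. *)
Definition chain_psum (p : nat -> nat -> R -> R) (i N : nat)
    (f : ('I_m -> nat) -> R) : R :=
  \big[Rplus/0%R]_(c : {ffun FP -> 'I_N} | nat_of_ord (c (inl (troot T))) == i)
     (chain_weight p (fun a => nat_of_ord (c a)) *
      f (fun r => nat_of_ord (c (inr r))))%R.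

(* For f >= 0: E^i[f(X_{x_1},...,X_{x_m})] = v  (sum of nonnegative series) *)
Definition chain_expect_is (p : nat -> nat -> R -> R) (i : nat)
    (f : ('I_m -> nat) -> R) (v : R) : Prop :=
  is_lub (fun y => exists N, y = chain_psum p i N f) v.

End TreeDefs.

Definition count_state (m i : nat) (y : 'I_m -> nat) : nat :=
  #|[pred r : 'I_m | y r == i]|.

Definition indicR (P : Prop) (d : {P} + {~ P}) : R := if d then 1%R else 0%R.

(* Observed on the finite tree spanned by the vertices and the points x_r, the chain has
   a product-form law, so its (truncated) expectations are computed by summing out the
   states at the leaves one at a time.  This shows that the total mass is at most 1 and
   tends to 1 as the truncation grows, and that the law of each X_{x_r} is dominated by
   p_{i.}(s); hence E^i[S_i] = m p and E^i[m - S_i] = m (1 - p) with p = p_ii(s).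
   Since 0 <= S_i <= m, (S_i - m p)^2 <= m (1 - 2 (1 - p)) (m - S_i) + (1 - p)^2 m^2, whose
   expectation is m^2 p (1 - p) <= m^2 (1 - p); Chebyshev's inequality then gives the bound
   (1 - p)/delta^2.  Finally p_ii(s) >= p_ii(s/n)^n >= (1 + q_ii s/n + o(1/n))^n yields
   p_ii(s) >= exp(q_ii s) = exp(-q_i s). *)

From mathcomp Require Import all_boot.
From Stdlib Require Import Reals Lra IndefiniteDescription.
From HB Require Import structures.
Set Warnings "-notation-overridden -redundant-canonical-projection".
Set Implicit Arguments.
Unset Strict Implicit.
Unset Printing Implicit Defensive.

Lemma RplusA : associative Rplus. Proof. by move=> a b c; rewrite Rplus_assoc. Qed.
Lemma RmultA : associative Rmult. Proof. by move=> a b c; rewrite Rmult_assoc. Qed.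
HB.instance Definition _ := Monoid.isComLaw.Build R 0%R Rplus RplusA Rplus_comm Rplus_0_l.
HB.instance Definition _ := Monoid.isComLaw.Build R 1%R Rmult RmultA Rmult_comm Rmult_1_l.
HB.instance Definition _ := Monoid.isMulLaw.Build R 0%R Rmult Rmult_0_l Rmult_0_r.
HB.instance Definition _ := Monoid.isAddLaw.Build R Rmult Rplus Rmult_plus_distr_r Rmult_plus_distr_l.

Open Scope R_scope.

Section RealBigops.
Variable I : Type.

Lemma sumR_ge0 (r : seq I) (P : pred I) (F : I -> R) :
  (forall k, P k -> 0 <= F k) -> 0 <= \big[Rplus/0]_(k <- r | P k) F k.
Proof. by move=> F0; apply: (big_ind (fun x => 0 <= x)) => //; [lra | move=> a b; lra]. Qed.

Lemma prodR_ge0 (r : seq I) (P : pred I) (F : I -> R) :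
  (forall k, P k -> 0 <= F k) -> 0 <= \big[Rmult/1]_(k <- r | P k) F k.
Proof. by move=> F0; apply: (big_ind (fun x => 0 <= x)) => //; [lra | move=> a b; nra]. Qed.

Lemma ler_sumR (r : seq I) (P : pred I) (F G : I -> R) :
  (forall k, P k -> F k <= G k) ->
  \big[Rplus/0]_(k <- r | P k) F k <= \big[Rplus/0]_(k <- r | P k) G k.
Proof. by move=> FG; apply: (big_ind2 (fun x y => x <= y)) => //; [lra | move=> a b c d; lra]. Qed.

Lemma ler_sumR_pred (r : seq I) (P Q : pred I) (F : I -> R) :
  (forall k, Q k -> 0 <= F k) -> (forall k, P k -> Q k) ->
  \big[Rplus/0]_(k <- r | P k) F k <= \big[Rplus/0]_(k <- r | Q k) F k.
Proof.
move=> F0 PQ; rewrite (big_mkcond P) (big_mkcond Q); apply: ler_sumR => k _.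
case: (boolP (P k)) => Pk; first by rewrite (PQ _ Pk); lra.
by case: ifP => Qk; [apply: F0 | lra].
Qed.

Lemma sumRB (r : seq I) (P : pred I) (F G : I -> R) :
  \big[Rplus/0]_(k <- r | P k) (F k - G k) =
  \big[Rplus/0]_(k <- r | P k) F k - \big[Rplus/0]_(k <- r | P k) G k.
Proof. by rewrite /Rminus big_split /= (big_morph Ropp Ropp_plus_distr Ropp_0). Qed.

End RealBigops.

Lemma sumR_const n a : \big[Rplus/0]_(r < n) a = INR n * a.
Proof.
elim: n => [|n IH]; first by rewrite big_ord0 /=; ring.
by rewrite big_ord_recr IH S_INR /=; ring.
Qed.

Lemma INR_card (I : finType) (P : pred I) :
  INR #|P| = \big[Rplus/0]_(r : I) (if P r then 1 else 0).
Proof.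
rewrite -sum1_card (big_morph INR (id1 := 0) (op1 := Rplus) (id2 := 0%nat) plus_INR erefl).
by rewrite big_mkcond; apply: eq_bigr => r _; rewrite unfold_in; case: (P r).
Qed.

Lemma sum_f_R0_bigop (f : nat -> R) n : sum_f_R0 f n = \big[Rplus/0]_(k < n.+1) f k.
Proof.
elim: n => [|n IH]; first by rewrite big_ord_recr big_ord0 /=; lra.
by rewrite /= IH [in RHS]big_ord_recr.
Qed.

Section NonnegativeSeries.
Variables (f : nat -> R) (l : R).
Hypothesis f_sum : infinite_sum f l.

Lemma partial_sum_le (f_ge0 : forall k, 0 <= f k) n : \big[Rplus/0]_(k < n) f k <= l.
Proof.
have f_grow : Un_growing (sum_f_R0 f) by move=> k /=; have := f_ge0 k.+1; lra.
case: n => [|n]; last by rewrite -sum_f_R0_bigop; apply: growing_ineq.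
by rewrite big_ord0; have := growing_ineq _ _ f_grow f_sum O; have := f_ge0 O; rewrite /=; lra.
Qed.

Lemma partial_sum_near e : 0 < e ->
  exists N0 : nat, forall n, (N0 <= n)%nat -> l - e <= \big[Rplus/0]_(k < n) f k.
Proof.
move=> e0; have [N HN] := f_sum e0; exists N.+1 => -[//|n] Nn.
rewrite -sum_f_R0_bigop; have /Rabs_def2[_] := HN n (leP (Nn : (N <= n)%nat)); lra.
Qed.

End NonnegativeSeries.

Lemma bernoulli_ineq e k : 0 <= e <= 1 -> 1 - INR k * e <= (1 - e) ^ k.
Proof.
move=> e01; elim: k => [|k IH]; first by rewrite /=; lra.
rewrite S_INR /=; have := pos_INR k; have := pow_le (1 - e) k ltac:(lra); nra.
Qed.

Section TreeSums.
Variables (A : finType) (rho : A) (pi : A -> A) (rank : A -> nat).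
Hypothesis pi_rho : pi rho = rho.
Hypothesis rank_pi : forall b, b != rho -> (rank (pi b) < rank b)%nat.

Definition parent_closed (U : {set A}) := forall b, b \in U -> pi b \in U.

Definition is_leaf (U : {set A}) (l : A) :=
  [/\ l \in U, l != rho & forall b, b \in U -> b != rho -> pi b != l].

Lemma pi_neq b : b != rho -> pi b != b.
Proof. by move/rank_pi => lt_rank; apply: contraTneq lt_rank => ->; rewrite ltnn. Qed.

Lemma exists_leaf (U : {set A}) : rho \in U -> U != [set rho] -> exists l, is_leaf U l.
Proof.
move=> rU UnR.
have [a0 a0U] : exists a0, a0 \in U :\ rho.
  apply/existsP; apply: contraR UnR => /existsPn noa; apply/eqP/setP => a.
  rewrite in_set1; case: (eqVneq a rho) => [->|ar]; first by rewrite rU.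
  by have := noa a; rewrite in_setD1 ar /= => /negbTE.
case: (@arg_maxnP A a0 (mem (U :\ rho)) rank a0U) => l lU' l_max.
move: lU'; rewrite inE in_setD1 => /andP[lr lU]; exists l; split => // b bU br.
apply/eqP => pib; have := rank_pi br; rewrite pib => lt_rank.
have := l_max b; rewrite inE in_setD1 br bU => /(_ isT) le_rank.
by move: (leq_trans lt_rank le_rank); rewrite ltnn.
Qed.

Lemma parent_closedD1 (U : {set A}) l : parent_closed U -> is_leaf U l -> parent_closed (U :\ l).
Proof.
move=> cU [_ lr leaf_l] b; rewrite in_setD1 => /andP[bl bU]; rewrite in_setD1 (cU _ bU) andbT.
case: (eqVneq b rho) => [->|br]; first by rewrite pi_rho eq_sym.
exact: leaf_l.
Qed.

Lemma leaf_ind (P : {set A} -> Prop) :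
  P [set rho] ->
  (forall U l, parent_closed U -> rho \in U -> is_leaf U l -> P (U :\ l) -> P U) ->
  forall U, parent_closed U -> rho \in U -> P U.
Proof.
move=> P_root P_step U; move: {2}#|U| (leqnn #|U|) => n.
elim: n U => [|n IH] U Un cU rU.
  by move: Un; rewrite leqn0 => /eqP/cards0_eq U0; move: rU; rewrite U0 inE.
case: (eqVneq U [set rho]) => [-> //|UnR].
have [l leaf_l] := exists_leaf rU UnR; have [lU lr _] := leaf_l.
apply: (P_step _ l) => //; apply: IH.
- by move: Un; rewrite (cardsD1 l U) lU.
- exact: parent_closedD1.
- by rewrite in_setD1 rU eq_sym lr.
Qed.

Variables (p : nat -> nat -> R -> R) (d : A -> R).
Hypothesis p_ge0 : forall j k t, 0 <= t -> 0 <= p j k t.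
Hypothesis d_pi : forall b, b != rho -> d (pi b) <= d b.

Definition edge_prob b j k := p j k (d b - d (pi b)).

Variables (i N : nat) (o : 'I_N).

Definition ffun_set (c : {ffun A -> 'I_N}) (l : A) (k : 'I_N) : {ffun A -> 'I_N} :=
  [ffun a => if a == l then k else c a].

(* [box_sum U B phi] is the expectation of phi for the chain started at i and observed on
   the subtree U, restricted to states below the bounds B; states outside U are frozen to o. *)
Definition in_box (U : {set A}) (B : A -> nat) (c : {ffun A -> 'I_N}) : bool :=
  [&& nat_of_ord (c rho) == i, [forall a, (a \in U) ==> (c a < B a)%nat]
    & [forall a, (a \notin U) ==> (c a == o)]].

Definition box_weight (U : {set A}) (c : {ffun A -> 'I_N}) :=
  \big[Rmult/1]_(b | (b \in U) && (b != rho)) edge_prob b (c (pi b)) (c b).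

Definition box_sum U B (phi : {ffun A -> 'I_N} -> R) :=
  \big[Rplus/0]_(c | in_box U B c) (box_weight U c * phi c).

Lemma edge_prob_ge0 b j k : b != rho -> 0 <= edge_prob b j k.
Proof. by move=> br; apply: p_ge0; have := d_pi br; lra. Qed.

Lemma box_weight_ge0 (U : {set A}) c : 0 <= box_weight U c.
Proof. by apply: prodR_ge0 => b /andP[_ br]; apply: edge_prob_ge0. Qed.

Lemma box_sum_ge0 (U : {set A}) B phi : (forall c, 0 <= phi c) -> 0 <= box_sum U B phi.
Proof. by move=> phi0; apply: sumR_ge0 => c _; apply: Rmult_le_pos; [apply: box_weight_ge0|]. Qed.

Lemma ler_box_sum (U : {set A}) B phi psi : (forall c, in_box U B c -> phi c <= psi c) ->
  box_sum U B phi <= box_sum U B psi.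
Proof. by move=> le_phi; apply: ler_sumR => c c_in; apply: Rmult_le_compat_l; [apply: box_weight_ge0|apply: le_phi]. Qed.

Lemma box_sumZ (U : {set A}) B a phi : box_sum U B (fun c => a * phi c) = a * box_sum U B phi.
Proof. by rewrite /box_sum big_distrr; apply: eq_bigr => c _ /=; ring. Qed.

Lemma box_sumD (U : {set A}) B phi psi :
  box_sum U B (fun c => phi c + psi c) = box_sum U B phi + box_sum U B psi.
Proof. by rewrite /box_sum -big_split; apply: eq_bigr => c _ /=; ring. Qed.

Lemma box_sumB (U : {set A}) B phi psi :
  box_sum U B (fun c => phi c - psi c) = box_sum U B phi - box_sum U B psi.
Proof.
transitivity (box_sum U B phi + box_sum U B (fun c => -1 * psi c)); last by rewrite box_sumZ; ring.
by rewrite -box_sumD; apply: eq_bigr => c _; ring.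
Qed.

Lemma box_sum_le_bounds (U : {set A}) B B' phi : (forall a, (B a <= B' a)%nat) ->
  (forall c, 0 <= phi c) -> box_sum U B phi <= box_sum U B' phi.
Proof.
move=> BB' phi0; apply: ler_sumR_pred => [c _|c /and3P[ci /forallP c_lt co]].
  by apply: Rmult_le_pos; [apply: box_weight_ge0 | apply: phi0].
apply/and3P; split => //; apply/forallP => a; apply/implyP => aU.
exact: leq_trans (implyP (c_lt a) aU) (BB' a).
Qed.

Lemma box_sum_sum (U : {set A}) B (I : finType) (F : I -> {ffun A -> 'I_N} -> R) :
  box_sum U B (fun c => \big[Rplus/0]_(r : I) F r c) = \big[Rplus/0]_(r : I) box_sum U B (F r).
Proof. by rewrite /box_sum; under eq_bigr do rewrite big_distrr; rewrite exchange_big. Qed.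

Lemma ffun_set_eq c l k : ffun_set c l k l = k.
Proof. by rewrite ffunE eqxx. Qed.

Lemma ffun_set_neq c l k a : a != l -> ffun_set c l k a = c a.
Proof. by move=> al; rewrite ffunE (negbTE al). Qed.

Lemma ffun_set_reset c l k : (ffun_set (ffun_set c l k) l o == c) = (c l == o).
Proof.
apply/eqP/eqP => [<- | E]; first by rewrite ffun_set_eq.
by apply/ffunP => a; rewrite !ffunE; case: eqP => [->|//]; rewrite E.
Qed.

Lemma box_weight_set (U : {set A}) l (c : {ffun A -> 'I_N}) k : is_leaf U l ->
  box_weight U (ffun_set c l k) = box_weight (U :\ l) c * edge_prob l (c (pi l)) k.
Proof.
move=> [lU lr leaf_l]; rewrite /box_weight (bigD1 l) /=; last by rewrite lU lr.
rewrite Rmult_comm; congr Rmult; last by rewrite ffun_set_eq ffun_set_neq // pi_neq.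
apply: eq_big => b; first by rewrite in_setD1; case: (b \in U); case: (b != rho); case: (b != l).
by move=> /andP[/andP[bU br] bl]; rewrite !ffun_set_neq //; apply: leaf_l.
Qed.

Lemma in_box_set (U : {set A}) B l (c : {ffun A -> 'I_N}) k : l \in U -> l != rho ->
  in_box U B (ffun_set c l k) && (c l == o) = in_box (U :\ l) B c && (k < B l)%nat.
Proof.
move=> lU lr; have rl : rho != l by rewrite eq_sym.
rewrite /in_box ffun_set_neq //; case: (nat_of_ord (c rho) == i) => //=.
apply/idP/idP.
  case/andP=> /andP[/forallP c_lt /forallP c_o] cl.
  apply/andP; split; [apply/andP; split|].
  - apply/forallP => a; apply/implyP; rewrite in_setD1 => /andP[al aU].
    by have := implyP (c_lt a) aU; rewrite ffun_set_neq.
  - apply/forallP => a; apply/implyP; rewrite in_setD1 negb_and negbK.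
    case/orP => [/eqP -> //|aU]; have := implyP (c_o a) aU; rewrite ffun_set_neq //.
    by apply: contraNneq aU => ->.
  - by have := implyP (c_lt l) lU; rewrite ffun_set_eq.
case/andP=> /andP[/forallP c_lt /forallP c_o] k_lt.
have -> : c l == o by have := implyP (c_o l); rewrite in_setD1 eqxx /=; apply.
rewrite andbT; apply/andP; split.
  apply/forallP => a; apply/implyP => aU; case: (eqVneq a l) => [->|al]; first by rewrite ffun_set_eq.
  by rewrite ffun_set_neq //; apply: (implyP (c_lt a)); rewrite in_setD1 al.
apply/forallP => a; apply/implyP => aU; have al : a != l by apply: contraNneq aU => ->.
by rewrite ffun_set_neq //; apply: (implyP (c_o a)); rewrite in_setD1 negb_and aU orbT.
Qed.

Lemma box_sum_leaf (U : {set A}) B phi l : is_leaf U l ->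
  box_sum U B phi = box_sum (U :\ l) B (fun c => \big[Rplus/0]_(k : 'I_N | (k < B l)%nat)
                                          (edge_prob l (c (pi l)) k * phi (ffun_set c l k))).
Proof.
move=> leaf_l; have [lU lr _] := leaf_l.
rewrite /box_sum; under [RHS]eq_bigr do rewrite big_distrr /=.
rewrite pair_big_dep /=.
rewrite (reindex_onto (fun ck : {ffun A -> 'I_N} * 'I_N => ffun_set ck.1 l ck.2)
                      (fun c => (ffun_set c l o, c l))); last first.
  by move=> c _; apply/ffunP => a; rewrite !ffunE; case: eqP => [->|].
apply: eq_big => [[c k]|[c k] _] /=.
  by rewrite ffun_set_eq xpair_eqE eqxx andbT ffun_set_reset in_box_set.
by rewrite box_weight_set //; ring.
Qed.

Lemma box_weight_root c : box_weight [set rho] c = 1.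
Proof. by rewrite /box_weight big_pred0 // => b; rewrite in_set1; case: eqP. Qed.

Lemma in_box_root_uniq B c c' : in_box [set rho] B c -> in_box [set rho] B c' -> c = c'.
Proof.
case/and3P => /eqP ci _ /forallP co; case/and3P => /eqP ci' _ /forallP co'.
apply/ffunP => a; case: (eqVneq a rho) => [->|ar]; first by apply: val_inj; rewrite /= ci ci'.
have aU : a \notin [set rho] by rewrite in_set1.
by rewrite (eqP (implyP (co a) aU)) (eqP (implyP (co' a) aU)).
Qed.

Lemma box_sum_root_le B phi v :
  (forall c : {ffun A -> 'I_N}, nat_of_ord (c rho) = i -> 0 <= phi c <= v) -> 0 <= v ->
  box_sum [set rho] B phi <= v.
Proof.
move=> phi_v v0; rewrite /box_sum; case: (pickP (in_box [set rho] B)) => [c Pc | P0].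
  rewrite (big_pred1 c); last first.
    move=> c' /=; apply/idP/idP => [Pc'|/eqP -> //]; apply/eqP; exact: in_box_root_uniq Pc' Pc.
  rewrite box_weight_root; case/and3P: Pc => /eqP ci _ _; have := phi_v c ci; lra.
by rewrite big_pred0.
Qed.

Lemma box_sum_root_ge B phi v : (i < N)%nat -> (i < B rho)%nat ->
  (forall c : {ffun A -> 'I_N}, nat_of_ord (c rho) = i -> v <= phi c) ->
  v <= box_sum [set rho] B phi.
Proof.
move=> iN iB phi_v; pose c0 := [ffun a => if a == rho then Ordinal iN else o].
have Pc0 : in_box [set rho] B c0.
  apply/and3P; split; first by rewrite ffunE eqxx.
    by apply/forallP => a; apply/implyP; rewrite in_set1 => /eqP ->; rewrite ffunE eqxx.
  by apply/forallP => a; apply/implyP; rewrite in_set1 => ar; rewrite ffunE (negbTE ar).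
rewrite /box_sum (big_pred1 c0); last first.
  move=> c' /=; apply/idP/idP => [Pc'|/eqP -> //]; apply/eqP; exact: in_box_root_uniq Pc' Pc0.
by rewrite box_weight_root Rmult_1_l; apply: phi_v; rewrite ffunE eqxx.
Qed.

Hypothesis sum_p_le1 : forall j t n, 0 <= t -> \big[Rplus/0]_(k < n) p j k t <= 1.

Lemma sum_edge_prob_le1 b j (P : pred 'I_N) : b != rho ->
  \big[Rplus/0]_(k : 'I_N | P k) edge_prob b j k <= 1.
Proof.
move=> br; have t0 : 0 <= d b - d (pi b) by have := d_pi br; lra.
by apply: Rle_trans (sum_p_le1 j N t0); apply: ler_sumR_pred => // k _; apply: edge_prob_ge0.
Qed.

Lemma box_mass_le1 U B : parent_closed U -> rho \in U -> box_sum U B (fun _ => 1) <= 1.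
Proof.
move: U; apply: leaf_ind => [|U l _ _ leaf_l IH].
  by apply: box_sum_root_le => [c _|]; lra.
rewrite (box_sum_leaf _ _ leaf_l); apply: Rle_trans IH; apply: ler_box_sum => c _.
have [_ lr _] := leaf_l.
by under eq_bigr do rewrite Rmult_1_r; apply: sum_edge_prob_le1.
Qed.

Hypothesis d_rho : d rho = 0.
Hypothesis chapman_le : forall a b s t n, 0 <= s -> 0 <= t ->
  \big[Rplus/0]_(k < n) (p a k s * p k b t) <= p a b (s + t).

Lemma box_marginal_le U B z j t : parent_closed U -> rho \in U -> z \in U -> 0 <= t ->
  box_sum U B (fun c => p (c z) j t) <= p i j (d z + t).
Proof.
move=> cU rU; move: U cU rU z t; apply: leaf_ind => [z t|U l cU _ leaf_l IH z t zU t0].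
  rewrite in_set1 => /eqP -> t0; rewrite d_rho Rplus_0_l.
  apply: box_sum_root_le => [c ->|]; last exact: p_ge0.
  by split; [apply: p_ge0 | lra].
have [lU lr _] := leaf_l; rewrite (box_sum_leaf _ _ leaf_l).
case: (eqVneq l z) => [<-|lz]; last first.
  apply: Rle_trans (IH _ _ _ t0); last by rewrite in_setD1 eq_sym lz.
  apply: ler_box_sum => c _; rewrite -[X in _ <= X]Rmult_1_l.
  under eq_bigr do rewrite ffun_set_neq 1?eq_sym //.
  rewrite -big_distrl /=; apply: Rmult_le_compat_r; first exact: p_ge0.
  exact: sum_edge_prob_le1.
have dl0 : 0 <= d l - d (pi l) by have := d_pi lr; lra.
have -> : d l + t = d (pi l) + (d l - d (pi l) + t) by ring.
apply: Rle_trans (IH (pi l) (d l - d (pi l) + t) _ ltac:(lra)); last by rewrite in_setD1 pi_neq // cU.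
apply: ler_box_sum => c _; under eq_bigr do rewrite ffun_set_eq.
apply: Rle_trans (chapman_le _ _ N dl0 t0).
by apply: ler_sumR_pred => // k _; apply: Rmult_le_pos; apply: p_ge0; lra.
Qed.

Lemma box_mass_ge U B e : parent_closed U -> rho \in U ->
  0 <= e <= 1 -> (i < N)%nat -> (i < B rho)%nat ->
  (forall b, b != rho -> forall j, (j < B (pi b))%nat ->
      1 - e <= \big[Rplus/0]_(k : 'I_N | (k < B b)%nat) edge_prob b j k) ->
  (1 - e) ^ (#|U| - 1) <= box_sum U B (fun _ => 1).
Proof.
move=> + + e01 iN iB mass_B; move: U; apply: leaf_ind => [|U l cU rU leaf_l IH].
  by rewrite cards1 /=; apply: box_sum_root_ge => // c _; lra.
have [lU lr _] := leaf_l.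
have piU : pi l \in U :\ l by rewrite in_setD1 pi_neq // cU.
have -> : (#|U| - 1 = (#|U :\ l| - 1).+1)%nat.
  have : (0 < #|U :\ l|)%nat by apply/card_gt0P; exists (pi l).
  by rewrite (cardsD1 l U) lU add1n !subn1 /= => /prednK.
rewrite (box_sum_leaf _ _ leaf_l) /=.
apply: (Rle_trans _ (box_sum (U :\ l) B (fun _ => (1 - e) * 1))).
  by rewrite box_sumZ; apply: Rmult_le_compat_l; [lra | exact: IH].
apply: ler_box_sum => c /and3P[_ /forallP c_lt _]; rewrite Rmult_1_r.
under eq_bigr do rewrite Rmult_1_r.
exact: mass_B (implyP (c_lt (pi l)) piU).
Qed.

End TreeSums.

Lemma RlebP a b : reflect (a <= b) (Rleb a b).
Proof. by rewrite /Rleb; case: Rle_dec => H; constructor. Qed.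

Lemma ReqbP a b : reflect (a = b) (Reqb a b).
Proof. by rewrite /Reqb; case: Req_EM_T => H; constructor. Qed.

Section TreeGeometry.
Variables (V : finType) (T : tree V).
Local Notation root := (troot T).
Local Notation par := (tpar T).

Lemma iter_par_root n : iter n par root = root.
Proof. by elim: n => //= n ->; rewrite tpar_root. Qed.

Lemma iter_par_card n v : (#|V| <= n)%nat -> iter n par v = root.
Proof. by move=> Vn; rewrite -(subnK Vn) iterD treach iter_par_root. Qed.

Lemma iter_par_cycle k v : (0 < k)%nat -> iter k par v = v -> v = root.
Proof.
move=> k0 cyc; have iter_mul j : iter (j * k) par v = v.
  by elim: j => [//|j IH]; rewrite mulSn iterD IH cyc.
rewrite -(iter_mul #|V|); apply: iter_par_card.
by rewrite -{1}(muln1 #|V|) leq_mul2l k0 orbT.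
Qed.

Definition edge_len (w : V) : R := if w == root then 0 else tlen T w.

Lemma edge_len_ge0 w : 0 <= edge_len w.
Proof. by rewrite /edge_len; case: eqP => [_|wr]; [lra | apply: Rlt_le; apply: tlen_pos]. Qed.

Lemma vdepthE v : vdepth T v = edge_len v + vdepth T (par v).
Proof.
rewrite /vdepth; have : (0 < #|V|)%nat by apply/card_gt0P; exists root.
case: #|V| (@iter_par_card) => // n iter_n _.
rewrite big_ord_recl [in RHS]big_ord_recr /= -iterSr iter_n // eqxx Rplus_0_r.
by congr Rplus; apply: eq_bigr => k _; rewrite /bump /= -iterSr.
Qed.

Lemma vdepth_ge0 v : 0 <= vdepth T v.
Proof. by apply: sumR_ge0 => k _; have := edge_len_ge0 (iter k par v); rewrite /edge_len. Qed.

Lemma vdepth_iter_le k v : vdepth T (iter k par v) <= vdepth T v.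
Proof.
elim: k => [|k IH] /=; first lra.
by apply: Rle_trans IH; rewrite [X in _ <= X]vdepthE; have := edge_len_ge0 (iter k par v); lra.
Qed.

Lemma pt_eqbP (X Y : V * R) : reflect (X = Y) (pt_eqb X Y).
Proof.
case: X Y => [a b] [c e]; rewrite /pt_eqb /=.
by apply: (iffP andP) => [[/eqP -> /ReqbP ->] // | [-> ->]]; split; [exact: eqxx | apply/ReqbP].
Qed.

Definition is_anc (X Y : V * R) : Prop :=
  X.1 = root \/ (X.1 = Y.1 /\ X.2 <= Y.2) \/ (exists k, (0 < k)%nat /\ iter k par Y.1 = X.1).

Lemma ancP X Y : reflect (is_anc X Y) (anc T X Y).
Proof.
apply: (iffP idP).
  case/orP => [/orP[/eqP|/andP[/eqP ? /RlebP ?]] | /existsP[k /andP[k0 /eqP ?]]].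
  - by left.
  - by right; left.
  - by right; right; exists k.
rewrite /anc; case=> [-> | [[-> /RlebP le_2] | [k [k0 iter_k]]]]; first by rewrite eqxx.
  by rewrite eqxx le_2 orbT.
case: (ltnP k #|V|) => kV; last by rewrite -iter_k iter_par_card // eqxx.
by apply/orP; right; apply/existsP; exists (Ordinal kV); rewrite /= k0 iter_k eqxx.
Qed.

Lemma is_anc_refl X : is_anc X X.
Proof. by right; left; split => //; lra. Qed.

Lemma valid_point_root X : valid_point T X -> X.1 = root -> X = (root, 0).
Proof. by case: X => a b /= [[/= -> ->] // | [/= nr _] ar]. Qed.

Lemma is_anc_trans X Y Z : is_anc X Y -> is_anc Y Z -> is_anc X Z.
Proof.
move=> [XY | [[XY1 XY2] | [k [k0 XYk]]]]; first by left.
  move=> [YZ | [[YZ1 YZ2] | [k' [k0' YZk]]]].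
  - by left; rewrite XY1.
  - by right; left; split; [rewrite XY1 | lra].
  - by right; right; exists k'; rewrite XY1.
move=> [YZ | [[YZ1 YZ2] | [k' [k0' YZk]]]].
- by left; rewrite -XYk YZ iter_par_root.
- by right; right; exists k; rewrite -YZ1.
- right; right; exists (k + k')%nat; split; first by rewrite addn_gt0 k0.
  by rewrite iterD YZk.
Qed.

Lemma is_anc_antisym X Y : valid_point T X -> valid_point T Y ->
  is_anc X Y -> is_anc Y X -> X = Y.
Proof.
move=> vX vY.
case: (eqVneq X.1 root) => [Xr|Xr].
  rewrite (valid_point_root vX Xr) => _ [Yr | [[Yr _] | [k [_ iter_k]]]];
    by rewrite (valid_point_root vY) // -iter_k iter_par_root.
case: (eqVneq Y.1 root) => [Yr|Yr].
  move=> [XY | [[XY _] | [k [_ iter_k]]]]; first by move/eqP: Xr.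
  - by move/eqP: Xr; rewrite XY.
  - by move/eqP: Xr; rewrite -iter_k Yr iter_par_root.
move=> [XY | [[XY1 XY2] | [k [k0 XYk]]]]; first by move/eqP: Xr.
  move=> [YX | [[YX1 YX2] | [k' [k0' YXk]]]]; first by move/eqP: Yr.
    by case: X Y XY1 XY2 YX2 {vX vY Xr Yr YX1} => a b [c e] /= -> *; congr pair; lra.
  by case/negP: Xr; apply/eqP; apply: (@iter_par_cycle k'); rewrite // YXk XY1.
move=> [YX | [[YX1 YX2] | [k' [k0' YXk]]]]; first by move/eqP: Yr.
  by case/negP: Yr; apply/eqP; apply: (@iter_par_cycle k); rewrite // XYk YX1.
case/negP: Xr; apply/eqP; apply: (@iter_par_cycle (k + k')); first by rewrite addn_gt0 k0.
by rewrite iterD YXk XYk.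
Qed.

Lemma is_anc_total X Y Z : is_anc X Z -> is_anc Y Z -> is_anc X Y \/ is_anc Y X.
Proof.
case: (eqVneq X.1 root) => [Xr|Xr]; first by left; left.
case: (eqVneq Y.1 root) => [Yr|Yr]; first by right; left.
have cmp_2 : X.1 = Y.1 -> is_anc X Y \/ is_anc Y X.
  by move=> XY; case: (Rle_dec X.2 Y.2) => ?; [left | right]; right; left; split; rewrite ?XY //; lra.
move=> [XZ | [[XZ1 _] | [k [k0 XZk]]]]; first by move/eqP: Xr.
  move=> [YZ | [[YZ1 _] | [k' [k0' YZk]]]]; first by move/eqP: Yr.
    by apply: cmp_2; rewrite XZ1 YZ1.
  by right; right; right; exists k'; rewrite XZ1.
move=> [YZ | [[YZ1 _] | [k' [k0' YZk]]]]; first by move/eqP: Yr.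
  by left; right; right; exists k; rewrite YZ1.
case: (leqP k k') => kk'; last first.
  left; right; right; exists (k - k')%nat; rewrite subn_gt0; split => //.
  by rewrite -YZk -iterD subnK // ltnW.
have XYk : iter (k' - k) par X.1 = Y.1 by rewrite -XZk -iterD subnK.
case: (posnP (k' - k)) => [k0'' | kpos]; first by apply: cmp_2; rewrite -XYk k0''.
by right; right; right; exists (k' - k)%nat.
Qed.

Lemma pdist_ge0 Y : valid_point T Y -> 0 <= pdist T Y.
Proof.
rewrite /pdist; case: eqP => [_|Yr]; first lra.
case=> [[/= Y1 _]|[_ [Y2 _]]]; first by case: Yr.
by have := vdepth_ge0 (par Y.1); lra.
Qed.

Lemma is_anc_pdist_le X Y : valid_point T X -> valid_point T Y -> is_anc X Y ->
  pdist T X <= pdist T Y.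
Proof.
move=> vX vY; rewrite {1}/pdist; case: (eqVneq X.1 root) => [_ _|Xr XY].
  exact: pdist_ge0.
have Yr : Y.1 <> root.
  case: XY => [XY | [[XY _] | [k [_ iter_k]]]]; first by move/eqP: Xr.
  - by rewrite -XY; apply/eqP.
  - by move=> Yr; move/eqP: Xr; rewrite -iter_k Yr iter_par_root.
have [_ [_ Xlen]] : X.1 <> root /\ 0 < X.2 /\ X.2 <= tlen T X.1.
  by case: vX => [[? _]|//]; move/eqP: Xr.
rewrite /pdist (introF eqP Yr).
case: XY => [XY | [[XY1 XY2] | [k [k0 iter_k]]]]; first by move/eqP: Xr.
  by rewrite XY1; lra.
have := vdepthE X.1; rewrite /edge_len (negbTE Xr).
have : vdepth T X.1 <= vdepth T (par Y.1).
  by rewrite -iter_k; case: k k0 {iter_k} => // k _; rewrite iterSr; apply: vdepth_iter_le.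
have := vdepth_ge0 (par Y.1); case: vY => [[]|[_ [Y2 _]]] //; lra.
Qed.

End TreeGeometry.

Section InducedTree.
Variables (V : finType) (T : tree V) (m : nat) (x : 'I_m -> V * R) (s : R).
Hypotheses (s_gt0 : 0 < s) (x_valid : forall r, valid_point T (x r))
  (x_inj : injective x) (x_dist : forall r, pdist T (x r) = s).
Local Notation root := (troot T).
Local Notation pt := (fpt T x).
Local Notation fprec := (fprec T x).
Local Notation fparent := (fparent T x).

Definition frho : FP V m := inl root.
Definition fdist (a : FP V m) := pdist T (pt a).

Lemma fpt1 a : (pt a).1 = match a with inl v => v | inr r => (x r).1 end.
Proof. by case: a => [v|r] //=; case: eqP => [->|]. Qed.

Lemma fpt_valid a : valid_point T (pt a).
Proof.
case: a => [v|r] /=; last exact: x_valid.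
case: eqP => [_|vr]; first by left.
by right; split => //=; split; [exact: tlen_pos | lra].
Qed.

Lemma fpt_rho : pt frho = (root, 0).
Proof. by rewrite /= eqxx. Qed.

Lemma fdist_rho : fdist frho = 0.
Proof. by rewrite /fdist fpt_rho /pdist /= eqxx. Qed.

Lemma fpt_nonroot a : a != frho -> (pt a).1 <> root.
Proof.
rewrite fpt1; case: a => [v|r] ar; first by apply: contraNnot ar => ->.
move=> xr; have := x_dist r; rewrite (valid_point_root (x_valid r) xr) /pdist /= eqxx; lra.
Qed.

Lemma fpt_eq a b : pt a = pt b -> [\/ a = b, tiebreak a b | tiebreak b a].
Proof.
case: a => [v|r]; case: b => [w|r'] E; try by [constructor 2 | constructor 3].
  by constructor 1; move: (f_equal fst E); rewrite !fpt1 => ->.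
by constructor 1; rewrite (x_inj E).
Qed.

Lemma fprecP a b :
  reflect (is_anc T (pt a) (pt b) /\ (pt a <> pt b \/ tiebreak a b)) (fprec a b).
Proof.
rewrite /fprec; apply: (iffP andP) => [[/ancP anc_ab neq_ab] | [anc_ab neq_ab]]; split => //.
- by case/orP: neq_ab => [/pt_eqbP ?|?]; [left | right].
- exact/ancP.
- by case: neq_ab => [ne | ->]; [apply/orP; left; apply/pt_eqbP | rewrite orbT].
Qed.

Lemma fprec_irr a : ~~ fprec a a.
Proof. by apply/negP => /fprecP[_ [|]] //; case: a. Qed.

Lemma fprec_trans a b c : fprec a b -> fprec b c -> fprec a c.
Proof.
move=> /fprecP[ab1 ab2] /fprecP[bc1 bc2]; apply/fprecP; split; first exact: is_anc_trans ab1 bc1.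
case: (pt_eqbP (pt a) (pt c)) => [ac|]; last by left.
have ab : pt a = pt b.
  by apply: is_anc_antisym (fpt_valid _) (fpt_valid _) ab1 _; rewrite ac.
have tie_ab : tiebreak a b by case: ab2.
have tie_bc : tiebreak b c by case: bc2 => // -[]; rewrite -ab.
by move: tie_ab tie_bc; case: b {ab ab1 ab2 bc1 bc2} => ? //; case: (a).
Qed.

Lemma fprec_total a a' b : fprec a b -> fprec a' b -> [\/ a = a', fprec a a' | fprec a' a].
Proof.
move=> /fprecP[ab _] /fprecP[a'b _].
case: (pt_eqbP (pt a) (pt a')) => [aa'|naa'].
  case: (fpt_eq aa') => [-> | tie | tie]; first by constructor 1.
  - by constructor 2; apply/fprecP; split; [rewrite aa'; apply: is_anc_refl | right].
  - by constructor 3; apply/fprecP; split; [rewrite aa'; apply: is_anc_refl | right].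
case: (is_anc_total ab a'b) => anc_aa'.
  by constructor 2; apply/fprecP; split; [|left].
by constructor 3; apply/fprecP; split; [|left => /esym].
Qed.

Lemma fprec_rho a : a != frho -> fprec frho a.
Proof.
move=> ar; apply/fprecP; split; first by left; rewrite fpt_rho.
by left => E; apply: (fpt_nonroot ar); rewrite -E fpt_rho.
Qed.

Lemma fprec_fdist_le a b : fprec a b -> fdist a <= fdist b.
Proof. by move=> /fprecP[ab _]; apply: is_anc_pdist_le (fpt_valid _) (fpt_valid _) ab. Qed.

Lemma fprec_to_rho a : ~~ fprec a frho.
Proof.
apply/negP => a_root; case: (eqVneq a frho) => [E|ar].
  by move: a_root; rewrite E (negbTE (fprec_irr _)).
by have := fprec_trans a_root (fprec_rho ar); rewrite (negbTE (fprec_irr _)).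
Qed.

Definition frank (b : FP V m) := #|[set a | fprec a b]|.

Lemma frank_lt a b : fprec a b -> (frank a < frank b)%nat.
Proof.
move=> ab; apply: proper_card; apply/properP; split.
  by apply/subsetP => c; rewrite !inE => ca; exact: fprec_trans ca ab.
by exists a; rewrite inE ?ab // fprec_irr.
Qed.

Definition fpar (b : FP V m) : FP V m := if [pick a | fparent a b] is Some a then a else frho.

Lemma exists_fparent b : b != frho -> exists a, fparent a b.
Proof.
move=> br; case: (@arg_maxnP (FP V m) frho (fprec^~ b) frank (fprec_rho br)) => a ab a_max.
exists a; apply/andP; split => //; apply/forallP => c; apply/negP => /andP[ac cb].
by have := leq_trans (frank_lt ac) (a_max c cb); rewrite ltnn.
Qed.

Lemma fparent_uniq a a' b : fparent a b -> fparent a' b -> a = a'.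
Proof.
move=> /andP[ab /forallP a_max] /andP[a'b /forallP a'_max].
case: (fprec_total ab a'b) => [// | aa' | a'a].
  by have := a_max a'; rewrite aa' a'b.
by have := a'_max a; rewrite a'a ab.
Qed.

Lemma fparent_rho a : fparent a frho = false.
Proof. by apply/negbTE; apply: contraNN (fprec_to_rho a) => /andP[]. Qed.

Lemma fparentE a b : fparent a b = (b != frho) && (a == fpar b).
Proof.
case: (eqVneq b frho) => [->|br]; first by rewrite fparent_rho.
have par_b : fparent (fpar b) b.
  rewrite /fpar; case: pickP => [// | none].
  by have [a0 a0b] := exists_fparent br; move: (none a0); rewrite a0b.
by apply/idP/eqP => [ab | ->] //; apply: fparent_uniq ab par_b.
Qed.

Lemma fpar_rho : fpar frho = frho.
Proof. by rewrite /fpar; case: pickP => [a|//]; rewrite fparent_rho. Qed.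

Lemma fprec_fpar b : b != frho -> fprec (fpar b) b.
Proof. by move=> br; have /andP[] : fparent (fpar b) b by rewrite fparentE br eqxx. Qed.

Lemma chain_weight_fpar (p : nat -> nat -> R -> R) (c : FP V m -> nat) :
  chain_weight T x p c = \big[Rmult/1]_(b | (b \in setT) && (b != frho))
       p (c (fpar b)) (c b) (fdist b - fdist (fpar b)).
Proof.
rewrite /chain_weight (reindex_onto (fun b => (fpar b, b)) snd); last first.
  by case=> a b /=; rewrite fparentE => /andP[_ /eqP ->].
by apply: eq_big => [b|//]; rewrite in_setT (fparentE (fpar b) b) !eqxx !andbT.
Qed.

End InducedTree.

Lemma exp_le_compat a b : a <= b -> exp a <= exp b.
Proof. by case/Rle_lt_or_eq_dec => [/exp_increasing|->]; lra. Qed.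

Lemma exp_pow a n : exp a ^ n = exp (INR n * a).
Proof.
elim: n => [|n IH]; first by rewrite /= Rmult_0_l exp_0.
by rewrite S_INR /= IH -exp_plus; congr exp; ring.
Qed.

Lemma exp_sub_sq_le y : -(1/2) <= y -> exp (y - 2 * y ^ 2) <= 1 + y.
Proof.
move=> y_ge; have y1 : 0 < 1 + y by lra.
have exp_ratio : exp (y / (1 + y)) <= 1 + y.
  have := exp_ineq1_le (- (y / (1 + y))); rewrite exp_Ropp.
  have -> : 1 + - (y / (1 + y)) = / (1 + y) by field; lra.
  by move=> /(Rinv_le_contravar _ _ (Rinv_0_lt_compat _ y1)); rewrite !Rinv_inv.
apply: Rle_trans exp_ratio; apply: exp_le_compat.
have -> : y / (1 + y) = y - 2 * y ^ 2 + y ^ 2 * (1 + 2 * y) / (1 + y) by field; lra.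
have : 0 <= y ^ 2 * (1 + 2 * y) / (1 + y).
  by apply: Rle_mult_inv_pos => //; apply: Rmult_le_pos; [apply: pow2_ge_0 | lra].
lra.
Qed.

Section TransitionFunction.
Variables (p : nat -> nat -> R -> R) (q : nat -> nat -> R).
Hypothesis p_tf : is_transition_function p.

Lemma p_ge0 j k t : 0 <= t -> 0 <= p j k t.
Proof. by case: p_tf => p0 _; apply: p0. Qed.

Lemma p_zero j k : p j k 0 = kron j k.
Proof. by case: p_tf => _ [_ []]. Qed.

Lemma sum_p_le1 j t n : 0 <= t -> \big[Rplus/0]_(k < n) p j k t <= 1.
Proof.
move=> t0; case: p_tf => p0 [p_sum _].
by apply: (partial_sum_le (p_sum j t t0)) => k; apply: p0.
Qed.

Lemma chapman_le a b s t n : 0 <= s -> 0 <= t ->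
  \big[Rplus/0]_(k < n) (p a k s * p k b t) <= p a b (s + t).
Proof.
move=> s0 t0; case: p_tf => p0 [_ [_ ck]].
by apply: (partial_sum_le (ck a b s t s0 t0)) => k; apply: Rmult_le_pos; apply: p0.
Qed.

Lemma p_le1 j k t : 0 <= t -> p j k t <= 1.
Proof.
move=> t0; apply: Rle_trans (sum_p_le1 j k.+1 t0).
rewrite big_ord_recr /=; set S := \big[Rplus/0]_(_ < _) _.
suff : 0 <= S by lra.
by apply: sumR_ge0 => l _; apply: p_ge0.
Qed.

Lemma p_diag_mul_le a s t : 0 <= s -> 0 <= t -> p a a s * p a a t <= p a a (s + t).
Proof.
move=> s0 t0; apply: Rle_trans (chapman_le a a a.+1 s0 t0).
rewrite big_ord_recr /=; set S := \big[Rplus/0]_(_ < _) _.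
suff : 0 <= S by lra.
by apply: sumR_ge0 => l _; apply: Rmult_le_pos; apply: p_ge0.
Qed.

Variable i : nat.
Local Notation u t := (p i i t).

Lemma p_diag_pow_le n h : 0 <= h -> u h ^ n <= u (INR n * h).
Proof.
move=> h0; elim: n => [|n IH]; first by rewrite /= Rmult_0_l p_zero /kron eqxx; lra.
rewrite S_INR Rmult_plus_distr_r Rmult_1_l /=.
have nh0 : 0 <= INR n * h by apply: Rmult_le_pos => //; apply: pos_INR.
apply: Rle_trans (p_diag_mul_le _ nh0 h0).
by rewrite Rmult_comm; apply: Rmult_le_compat_r => //; apply: p_ge0.
Qed.

Hypothesis q_Q : is_Q_matrix_of p q.

Lemma p_diag_near0 e : 0 < e ->
  exists dl, 0 < dl /\ forall h, 0 < h -> h < dl -> 1 + (q i i - e) * h <= u h.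
Proof.
move=> e0; have [dl [dl0 near]] := q_Q i i e0; exists dl; split => // h h0 hdl.
have /Rabs_def2[_] := near h h0 hdl; rewrite /kron eqxx => lt_e.
have : (q i i - e) * h < (u h - 1) / h * h by apply: Rmult_lt_compat_r; lra.
by rewrite /Rdiv Rmult_assoc Rinv_l; lra.
Qed.

(* Splitting [0, s] into n steps of length h = s/n, with u h >= 1 + y >= exp (y - 2 y^2)
   for y = (q_ii - e) h, gives u s >= u h ^ n >= exp (q_ii s - th). *)
Lemma p_diag_ge_exp_sub s th : 0 < s -> 0 < th -> exp (q i i * s - th) <= u s.
Proof.
move=> s0 th0; have e0 : 0 < th / (2 * s) by apply: Rdiv_lt_0_compat; lra.
have [dl [dl0 near]] := p_diag_near0 e0.
set a := q i i * s - th / 2.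
have [n n_big] := INR_unbounded (s / dl + 2 * Rabs a + 4 * a ^ 2 / th).
set M := INR n in n_big; set h := s / M; set y := a / M.
have sdl : s / dl * dl = s by field; lra.
have ath : 4 * a ^ 2 / th * th = 4 * a ^ 2 by field; lra.
have sdl0 : 0 < s / dl by apply: Rdiv_lt_0_compat.
have ath0 : 0 <= 4 * a ^ 2 / th by apply: Rle_mult_inv_pos; [nra | lra].
have a_ge := Rle_abs (- a); rewrite Rabs_Ropp in a_ge.
have M0 : 0 < M by have := Rabs_pos a; lra.
have hM : h * M = s by rewrite /h; field; lra.
have yM : y * M = a by rewrite /y; field; lra.
have h0 : 0 < h by apply: Rdiv_lt_0_compat.
have sM : s < M * dl by rewrite -sdl; apply: Rmult_lt_compat_r => //; have := Rabs_pos a; lra.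
have h_lt : h < dl by nra.
have aM : 2 * Rabs a < M by lra.
have y_ge : -(1/2) <= y by nra.
have step_ge : 1 + y <= u h.
  have -> : y = (q i i - th / (2 * s)) * h by rewrite /y /h /a; field; lra.
  exact: near.
have u_pow := p_diag_pow_le n (Rlt_le _ _ h0).
rewrite -/M (_ : M * h = s) in u_pow; last by rewrite Rmult_comm.
apply: Rle_trans u_pow; apply: Rle_trans (pow_incr _ _ n (conj (Rlt_le _ _ (exp_pos _))
  (Rle_trans _ _ _ (exp_sub_sq_le y_ge) step_ge))).
rewrite exp_pow -/M; apply: exp_le_compat.
have -> : M * (y - 2 * y ^ 2) = a - 2 * a ^ 2 / M by rewrite /y; field; lra.
set z := 2 * a ^ 2 / M; have zM : z * M = 2 * a ^ 2 by rewrite /z; field; lra.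
have a2_lt : 4 * a ^ 2 < M * th.
  by rewrite -ath; apply: Rmult_lt_compat_r => //; have := Rabs_pos a; lra.
have : z <= th / 2 by apply: Rnot_lt_le => /(Rmult_lt_compat_r M _ _ M0); lra.
rewrite /a; lra.
Qed.

Lemma exp_le_p_diag s : 0 < s -> exp (q i i * s) <= u s.
Proof.
move=> s0; apply: Rle_plus_epsilon => e e0.
set E := exp (q i i * s); have E0 : 0 < E by apply: exp_pos.
have := p_diag_ge_exp_sub s0 (Rdiv_lt_0_compat _ _ e0 E0); rewrite /Rminus exp_plus -/E.
have := Rmult_le_compat_l _ _ _ (Rlt_le _ _ E0) (exp_ineq1_le (- (e / E))).
have -> : E * (1 + - (e / E)) = E - e by field; lra.
lra.
Qed.

End TransitionFunction.

(* Chebyshev's inequality, with (M - a)^2 <= M (M - a) reducing the second moment of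
   a - pM to the first moment of M - a. *)
Lemma indicR_deviation_le M pp dl a : 0 < M -> 0 < dl -> 0 <= a <= M ->
  (dl * M) ^ 2 * indicR (Rlt_dec (dl * M) (Rabs (a - pp * M))) <=
  M * (1 - 2 * (1 - pp)) * (M - a) + (1 - pp) ^ 2 * M ^ 2.
Proof.
move=> M0 dl0 aM.
have sq_le : (a - pp * M) ^ 2 <= M * (1 - 2 * (1 - pp)) * (M - a) + (1 - pp) ^ 2 * M ^ 2.
  have : (M - a) ^ 2 <= M * (M - a) by nra.
  nra.
rewrite /indicR; case: Rlt_dec => [dev|ndev]; cbv [is_left]; last by have := pow2_ge_0 (a - pp * M); lra.
rewrite Rmult_1_r; apply: Rle_trans sq_le; rewrite -(pow2_abs (a - pp * M)).
by apply: pow_incr; split; [apply: Rmult_le_pos | ]; lra.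
Qed.

Lemma chebyshev_combination_le M qq X Z : 0 <= M -> 0 <= qq <= 1 ->
  0 <= X <= M * qq -> 0 <= Z <= 1 -> M * (1 - 2 * qq) * X + qq ^ 2 * M ^ 2 * Z <= M ^ 2 * qq.
Proof.
move=> M0 qq01 X_bd Z01; have MM := pow2_ge_0 M; have MX : 0 <= M * X by nra.
have : qq ^ 2 * M ^ 2 * Z <= qq ^ 2 * M ^ 2 by have := pow2_ge_0 (qq * M); nra.
case: (Rle_dec 0 (1 - 2 * qq)) => sgn.
  have : M * X <= M * (M * qq) by apply: Rmult_le_compat_l; lra.
  nra.
have : qq ^ 2 * M ^ 2 <= qq * M ^ 2 by nra.
nra.
Qed.

Lemma count_state_le m i (y : 'I_m -> nat) : (count_state i y <= m)%nat.
Proof. by rewrite /count_state; apply: leq_trans (max_card _) _; rewrite card_ord. Qed.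

Section ChainOnTree.
Variable p : nat -> nat -> R -> R.
Hypothesis p_tf : is_transition_function p.
Variables (V : finType) (T : tree V) (s : R) (m : nat) (x : 'I_m -> V * R).
Hypotheses (s_gt0 : 0 < s) (x_valid : forall r, valid_point T (x r))
  (x_inj : injective x) (x_dist : forall r, pdist T (x r) = s).
Variable i : nat.

Local Notation A := (FP V m).
Local Notation rho := (frho T m).
Local Notation pi := (fpar T x).
Local Notation d := (fdist T x).
Local Notation trunc N o phi := (@box_sum A rho pi p d i N o [set: A] (fun _ => N%nat) phi).

Let pi_rho : pi rho = rho := fpar_rho s_gt0 x_valid x_dist.
Let fprec_pi b (br : b != rho) := fprec_fpar s_gt0 x_valid x_inj x_dist br.
Let frank_pi b (br : b != rho) : (frank T x (pi b) < frank T x b)%nat := frank_lt x_valid (fprec_pi br).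
Let d_pi b (br : b != rho) : d (pi b) <= d b := fprec_fdist_le x_valid (fprec_pi br).
Let p0 := p_ge0 p_tf.
Let sum_p1 := sum_p_le1 p_tf.
Let setT_closed : parent_closed pi [set: A] := fun b _ => in_setT (pi b).

Lemma chain_psum_trunc N (o : 'I_N) (f : ('I_m -> nat) -> R) :
  chain_psum T x p i N f = trunc N o (fun c => f (fun r => c (inr r))).
Proof.
rewrite /chain_psum /box_sum; apply: eq_big => [c|c _].
  apply/idP/idP => [ci | /and3P[] //]; apply/and3P; split => //; apply/forallP => a.
    by rewrite ltn_ord implybT.
  by rewrite in_setT.
by rewrite (chain_weight_fpar s_gt0 x_valid x_inj x_dist).
Qed.

Lemma chain_psum_small N f : (N <= i)%nat -> chain_psum T x p i N f = 0.
Proof.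
move=> Ni; rewrite /chain_psum big_pred0 // => c; apply/negbTE; apply: contraTneq Ni => <-.
by rewrite -ltnNge ltn_ord.
Qed.

Lemma trunc_mass_le1 N (o : 'I_N) : trunc N o (fun _ => 1) <= 1.
Proof. exact: (box_mass_le1 pi_rho frank_pi p0 d_pi i o sum_p1 (fun _ => N) setT_closed (in_setT _)). Qed.

Definition at_state N (a : A) (j : nat) (c : {ffun A -> 'I_N}) : R :=
  if nat_of_ord (c a) == j then 1 else 0.

Lemma trunc_at_state_le N (o : 'I_N) r j : trunc N o (at_state (inr r) j) <= p i j s.
Proof.
have -> : trunc N o (at_state (inr r) j) = trunc N o (fun c => p (c (inr r)) j 0).
  by apply: eq_bigr => c _; rewrite (p_zero p_tf) /kron /at_state.
have := box_marginal_le pi_rho frank_pi p0 d_pi i o sum_p1 (fdist_rho T x) (chapman_le p_tf)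
  (fun _ => N) j setT_closed (in_setT _) (in_setT (inr r)) (Rle_refl 0).
by rewrite /fdist /= x_dist Rplus_0_r.
Qed.

Lemma sum_at_state N (a : A) (c : {ffun A -> 'I_N}) :
  \big[Rplus/0]_(j : 'I_N) at_state a j c = 1.
Proof.
rewrite (bigD1 (c a)) //= /at_state eqxx big1 => [|j /negbTE]; first lra.
by rewrite eq_sym -(inj_eq val_inj) /= => ->.
Qed.

(* The missing mass at x_r sits on states j <> i, whose marginals are at most p_ij(s). *)
Lemma trunc_mass_sub_at_state N (o : 'I_N) r : (i < N)%nat ->
  trunc N o (fun _ => 1) - trunc N o (at_state (inr r) i) <= 1 - p i i s.
Proof.
move=> iN; set io := Ordinal iN; pose E (j : 'I_N) := trunc N o (at_state (inr r) j).
have mass_split : trunc N o (fun _ => 1) = E io + \big[Rplus/0]_(j < N | j != io) E j.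
  transitivity (\big[Rplus/0]_(j : 'I_N) E j); last exact: bigD1.
  by rewrite /E -box_sum_sum; apply: eq_bigr => c _; rewrite sum_at_state.
have p_split : p i i s + \big[Rplus/0]_(j < N | j != io) p i j s <= 1.
  by have := sum_p1 i N (Rlt_le _ _ s_gt0); rewrite (bigD1 io).
have : \big[Rplus/0]_(j < N | j != io) E j <= \big[Rplus/0]_(j < N | j != io) p i j s.
  by apply: ler_sumR => j _; apply: trunc_at_state_le.
rewrite mass_split; move: p_split; rewrite -/(E io).
set SE := \big[Rplus/0]_(j < N | j != io) E j; set Sp := \big[Rplus/0]_(j < N | j != io) p i j s.
move: (E io) => Ei; lra.
Qed.

(* Truncation levels are chosen from the root down: the level of b must make the
   kernel of the edge into b almost stochastic from every state allowed at its parent. *)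
Lemma exists_truncation e : 0 < e -> exists B : A -> nat, (i < B rho)%nat /\
  forall b, b != rho -> forall j, (j < B (pi b))%nat ->
    1 - e <= \big[Rplus/0]_(k < B b) edge_prob pi p d b j k.
Proof.
move=> e0.
have n0_ex (bj : A * nat) : exists n0 : nat, bj.1 != rho ->
    forall n, (n0 <= n)%nat -> 1 - e <= \big[Rplus/0]_(k < n) edge_prob pi p d bj.1 bj.2 k.
  case: bj => b j /=; case: (eqVneq b rho) => [_|br]; first by exists 0%nat.
  have t0 : 0 <= d b - d (pi b) by have := d_pi br; lra.
  case: p_tf => _ [p_sum _]; have [n1 n1P] := partial_sum_near (p_sum j _ t0) e0.
  by exists n1 => _; apply: n1P.
have [n0 n0P] := functional_choice _ n0_ex.
pose next M := maxn M (\max_(b : A) \max_(j < M) n0 (b, nat_of_ord j)).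
have iter_mono r k : (iter r next i.+1 <= iter (k + r) next i.+1)%nat.
  by elim: k => [//|k IH]; rewrite addSn /=; apply: leq_trans IH (leq_maxl _ _).
exists (fun a => iter (frank T x a) next i.+1); split.
  by have := iter_mono 0%nat (frank T x rho); rewrite addn0.
move=> b br j jB; have := frank_pi br.
case Er: (frank T x b) => [//|r]; rewrite ltnS => le_r.
apply: (n0P (b, j) br); apply: leq_trans (leq_maxr _ _); apply: leq_trans (leq_bigmax b).
have jr : (j < iter r next i.+1)%nat.
  by apply: leq_trans jB _; rewrite -(subnK le_r); apply: iter_mono.
exact: (leq_bigmax (F := fun j0 : 'I_(iter r next i.+1) => n0 (b, nat_of_ord j0)) (Ordinal jr)).
Qed.

Lemma trunc_mass_near1 e : 0 < e -> exists N0 : nat, forall N (o : 'I_N),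
  (N0 <= N)%nat -> (i < N)%nat -> 1 - e <= trunc N o (fun _ => 1).
Proof.
move=> e0; case: (Rle_dec 1 e) => [e_ge1 | /Rnot_le_lt e_lt1].
  exists 0%nat => N o _ _.
  by apply: (Rle_trans _ 0); [lra | apply: (box_sum_ge0 p0 d_pi) => _; apply: Rle_0_1].
set n := #|[set: A]|; have n0 := pos_INR n.
set e' := e / (INR n + 1); have e'0 : 0 < e' by apply: Rdiv_lt_0_compat; lra.
have e'n : e' * (INR n + 1) = e by rewrite /e'; field; lra.
have [B [iB B_mass]] := exists_truncation e'0.
exists (\max_(a : A) B a) => N o NB iN.
have BN a : (B a <= N)%nat by apply: leq_trans NB; apply: leq_bigmax.
apply: Rle_trans (box_sum_le_bounds p0 d_pi i o [set: A] BN (fun _ => Rle_0_1)).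
have e'01 : 0 <= e' <= 1 by split; nra.
have B_mass' b : b != rho -> forall j, (j < B (pi b))%nat ->
    1 - e' <= \big[Rplus/0]_(k < N | (k < B b)%nat) edge_prob pi p d b j k.
  by move=> br j jB; rewrite -(big_ord_widen _ _ (BN b)); apply: B_mass.
apply: Rle_trans (box_mass_ge pi_rho frank_pi p0 d_pi o setT_closed (in_setT _) e'01 iN iB B_mass').
apply: Rle_trans (bernoulli_ineq (n - 1) e'01).
have : INR (n - 1) <= INR n by apply: le_INR; apply/leP; apply: leq_subr.
nra.
Qed.

Lemma count_stateE N (c : {ffun A -> 'I_N}) :
  INR (count_state i (fun r => nat_of_ord (c (inr r)))) =
  \big[Rplus/0]_(r : 'I_m) at_state (inr r) i c.
Proof. by rewrite /count_state INR_card; apply: eq_bigr => r _; rewrite /at_state. Qed.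

Lemma chain_psum_count N (o : 'I_N) :
  chain_psum T x p i N (fun y => INR (count_state i y)) =
  \big[Rplus/0]_(r : 'I_m) trunc N o (at_state (inr r) i).
Proof. by rewrite (chain_psum_trunc o) -box_sum_sum; apply: eq_bigr => c _; rewrite count_stateE. Qed.

Lemma chain_expect_count :
  chain_expect_is T x p i (fun y => INR (count_state i y)) (p i i s * INR m).
Proof.
split.
  move=> _ [N ->]; case: (leqP N i) => [Ni | iN].
    by rewrite chain_psum_small //; apply: Rmult_le_pos; [apply: p0; lra | apply: pos_INR].
  rewrite (chain_psum_count (Ordinal iN)) [X in _ <= X]Rmult_comm -sumR_const.
  by apply: ler_sumR => r _; apply: trunc_at_state_le.
move=> b b_ub; apply: Rle_plus_epsilon => eps eps0.
have m0 := pos_INR m.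
set e := eps / (INR m + 1); have e0 : 0 < e by apply: Rdiv_lt_0_compat; lra.
have em : e * (INR m + 1) = eps by rewrite /e; field; lra.
have [N0 N0_mass] := trunc_mass_near1 e0.
set N := maxn N0 i.+1; have iN : (i < N)%nat by rewrite leq_max leqnn orbT.
have := b_ub _ (ex_intro _ N erefl); rewrite (chain_psum_count (Ordinal iN)).
have : INR m * (p i i s - e) <= \big[Rplus/0]_(r : 'I_m) trunc N (Ordinal iN) (at_state (inr r) i).
  rewrite -sumR_const; apply: ler_sumR => r _.
  have := trunc_mass_sub_at_state (Ordinal iN) r iN.
  have := N0_mass _ (Ordinal iN) (leq_maxl _ _) iN; lra.
nra.
Qed.

Lemma trunc_count_gap N (o : 'I_N) : (i < N)%nat ->
  0 <= trunc N o (fun c => INR m - INR (count_state i (fun r => nat_of_ord (c (inr r)))))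
    <= INR m * (1 - p i i s).
Proof.
move=> iN.
have -> : trunc N o (fun c => INR m - INR (count_state i (fun r => nat_of_ord (c (inr r))))) =
    \big[Rplus/0]_(r : 'I_m) (trunc N o (fun _ => 1) - trunc N o (at_state (inr r) i)).
  under eq_bigr do rewrite -box_sumB.
  rewrite -box_sum_sum; apply: eq_bigr => c _; congr Rmult.
  by rewrite sumRB count_stateE sumR_const Rmult_1_r.
split.
  apply: sumR_ge0 => r _; rewrite -box_sumB; apply: (box_sum_ge0 p0 d_pi) => c.
  by rewrite /at_state; case: eqP; lra.
by rewrite -sumR_const; apply: ler_sumR => r _; apply: trunc_mass_sub_at_state.
Qed.

Lemma chain_deviation_le delta N : 0 < delta ->
  chain_psum T x p i N (fun y => indicR (Rlt_dec (delta * INR m)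
          (Rabs (INR (count_state i y) - p i i s * INR m))))
  <= (1 - p i i s) / delta ^ 2.
Proof.
move=> dl0; have pp0 := p0 i i (Rlt_le _ _ s_gt0).
have pp1 := p_le1 p_tf i i (Rlt_le _ _ s_gt0).
have rhs0 : 0 <= (1 - p i i s) / delta ^ 2 by apply: Rle_mult_inv_pos; [lra | apply: pow_lt].
case: (leqP N i) => [Ni | iN]; first by rewrite chain_psum_small.
set o := Ordinal iN; rewrite (chain_psum_trunc o).
set M := INR m; have M0 : 0 <= M by apply: pos_INR.
set cnt := fun c : {ffun A -> 'I_N} => INR (count_state i (fun r => nat_of_ord (c (inr r)))).
have cnt_bd c : 0 <= cnt c <= M by split; [apply: pos_INR | apply/le_INR/leP/count_state_le].
case: (Req_dec M 0) => [M_eq0 | M_neq0].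
  apply: Rle_trans rhs0; rewrite -(Rmult_0_l (trunc N o (fun _ => 1))) -box_sumZ.
  apply: (ler_box_sum p0 d_pi) => c _; rewrite /indicR; case: Rlt_dec => [dev|ndev]; cbv [is_left]; last lra.
  have [c0 cM] := cnt_bd c; have cnt0 : cnt c = 0 by lra.
  by move: dev; rewrite /cnt in cnt0; rewrite cnt0 M_eq0 !Rmult_0_r Rminus_0_r Rabs_R0; lra.
set K := (delta * M) ^ 2; have K0 : 0 < K by apply: pow_lt; nra.
apply: (Rmult_le_reg_l K) => //; rewrite -box_sumZ.
apply: (Rle_trans _ (trunc N o (fun c => M * (1 - 2 * (1 - p i i s)) * (M - cnt c)
                                          + (1 - p i i s) ^ 2 * M ^ 2 * 1))).
  apply: (ler_box_sum p0 d_pi) => c _; rewrite Rmult_1_r; have := cnt_bd c; rewrite /cnt => ?.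
  by apply: indicR_deviation_le => //; lra.
rewrite box_sumD !box_sumZ; apply: Rle_trans (chebyshev_combination_le M0 _
  (trunc_count_gap o iN) (conj (box_sum_ge0 p0 d_pi i o _ _ (fun _ => Rle_0_1)) (trunc_mass_le1 o))) _.
  lra.
by right; rewrite /K; field; lra.
Qed.

End ChainOnTree.

Theorem mainTheorem9
  (p : nat -> nat -> R -> R) (q : nat -> nat -> R)
  (Hp : is_transition_function p) (Hq : is_Q_matrix_of p q)
  (Hsc : stable_conservative q)
  (V : finType) (T : tree V) (s : R) (m : nat) (x : 'I_m -> V * R)
  (Hs : (0 < s)%R)
  (Hvalid : forall r, valid_point T (x r))
  (Hdistinct : injective x)
  (Hdist : forall r, pdist T (x r) = s)
  (i : nat) :
  chain_expect_is T x p i (fun y => INR (count_state i y)) (p i i s * INR m)%R /\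
  (forall delta : R, (0 < delta)%R ->
     forall N : nat,
       (chain_psum T x p i N
          (fun y => indicR
             (Rlt_dec (delta * INR m)
                      (Rabs (INR (count_state i y) - p i i s * INR m))))
        <= (1 - exp (- (- q i i) * s)) / (delta ^ 2))%R).
Proof.
split; first exact: chain_expect_count.
move=> delta delta_gt0 N.
apply: Rle_trans (chain_deviation_le Hp Hs Hvalid Hdistinct Hdist i N delta_gt0) _.
rewrite Ropp_involutive; apply: Rmult_le_compat_r.
  by apply/Rlt_le/Rinv_0_lt_compat/pow_lt.
by have := exp_le_p_diag Hp i Hq Hs; lra.
Qed.
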